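(* Let $m\ge 2$, let $f(t)=t^m-\sum_{s=0}^{m-1}u_{m-s}t^s$ with $u_1,\dots,u_m\in\mathbb{Q}$ have $m$ distinct roots $\alpha_1,\dots,\alpha_m$, let $V$ be the Vandermonde matrix $V_{s,j}=\alpha_s^{\,j-1}$, let $\mathbf{x}=(x_0,\dots,x_{m-1})\in\mathbb{Q}^m$, $M=\sum_{n=0}^{m-1}x_nA^n$ with $A$ the companion matrix of $f$, and $\gamma_s=\sum_{i=0}^{m-1}x_i\alpha_s^i$. Fix $k\in\{1,\dots,m\}$ and indices $i,j,p,q\in\{1,\dots,m\}$, $(i,j)\ne(p,q)$, and set $A_s=(V^{-1})_{i,s}V_{s,j}$, $B_s=(V^{-1})_{p,s}V_{s,q}$ for $s=1,\dots,m$, with $B_k\neq0$, and $L=A_k/B_k$. Suppose $$0<c^{-1}(\mathbf{x},\alpha_k):=\max\left\{\frac{|\gamma_s|}{|\gamma_k|}: s\ne k\right\}<1,$$ let $l\neq k$ be an index with $c^{-1}(\mathbf{x},\alpha_k)=|\gamma_l|/|\gamma_k|$, and assume $A_lB_k-A_kB_l\neq 0$. Then there is a constant $C>0$ such that for all sufficiently large $n$, $$\left|\frac{M^n_{i,j}}{M^n_{p,q}}-L\right|\le C\,\bigl(c^{-1}(\mathbf{x},\alpha_k)\bigr)^n,$$ i.e. the error is $O\bigl((c^{-1}(\mathbf{x},\alpha_k))^n\bigr)$.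
   Context: The companion matrix $A=(A_{a,b})$ of $f(t)=t^m-\sum_{s=0}^{m-1}u_{m-s}t^s$ is the $m\times m$ matrix with $A_{a+1,a}=1$ for $a=1,\dots,m-1$, last column $(A_{1,m},\dots,A_{m,m})^T=(u_m,u_{m-1},\dots,u_1)^T$, and all other entries $0$. $M^n_{a,b}$ denotes the $(a,b)$-entry of the $n$-th power of $M$; $(V^{-1})_{a,b}$ denotes the $(a,b)$-entry of the inverse of $V$. *)

From HB Require Import structures.
From mathcomp Require Import all_boot all_order all_algebra all_field.
Set Implicit Arguments. Unset Strict Implicit. Unset Printing Implicit Defensive.
Import Order.TTheory GRing.Theory Num.Theory.
Local Open Scope ring_scope.

(* Indices are 0-based: 'I_m = {0,...,m-1} stands for {1,...,m}.
   u : 'I_m -> rat encodes u_1,...,u_m via u_(t+1) = u t. *)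

Definition charpoly_u (m : nat) (u : 'I_m -> rat) : {poly rat} :=
  'X^m - \sum_(s < m) u (rev_ord s) *: 'X^s.

Definition companion (m : nat) (u : 'I_m -> rat) : 'M[rat]_m :=
  \matrix_(a < m, b < m)
     if b.+1 == m then u (rev_ord a) else ((a : nat) == b.+1)%:R.

Definition vandermonde (m : nat) (alpha : 'I_m -> algC) : 'M[algC]_m :=
  \matrix_(s < m, j < m) alpha s ^+ j.

Definition Mx (m : nat) (u : 'I_m -> rat) (x : 'I_m -> rat) : 'M[rat]_m :=
  \sum_(n < m) x n *: (companion u) ^+ n.

Definition gamma (m : nat) (x : 'I_m -> rat) (alpha : 'I_m -> algC) (s : 'I_m) : algC :=
  \sum_(i < m) ratr (x i) * alpha s ^+ i.

Definition cinv (m : nat) (x : 'I_m -> rat) (alpha : 'I_m -> algC) (k : 'I_m) : algC :=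
  \big[Num.max/0]_(s < m | s != k) (`|gamma x alpha s| / `|gamma x alpha k|).

From HB Require Import structures.
From mathcomp Require Import all_boot all_order all_algebra all_field.
From mathcomp Require Import ring.
Set Implicit Arguments.
Unset Strict Implicit.
Unset Printing Implicit Defensive.
Import Order.TTheory GRing.Theory Num.Theory.
Local Open Scope ring_scope.

(* Distinct roots make the Vandermonde matrix V invertible, and each row
   (alpha_s^j)_j of V is a left eigenvector of the companion matrix, hence of
   M = sum_n x_n A^n with eigenvalue gamma_s.  Therefore
   M^n_{ij} = sum_s A_s gamma_s^n and M^n_{pq} = sum_s B_s gamma_s^n.  After
   dividing both sums by gamma_k^n, every term but the k-th is bounded by a
   constant times r^n, where r = max_{s<>k} |gamma_s|/|gamma_k| < 1; hence
   the ratio is within O(r^n) of A_k/B_k.  Only this upper bound is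
   asserted, so the index l and the condition A_l B_k - A_k B_l <> 0, which
   make the rate sharp, are not needed. *)

Lemma bernoulli_ler (R : numDomainType) (h : R) n :
  0 <= h -> 1 + h *+ n <= (1 + h) ^+ n.
Proof.
move=> h_ge0; elim: n => [|n IHn]; first by rewrite mulr0n addr0 expr0.
have h1_ge0 : 0 <= 1 + h by rewrite addr_ge0.
rewrite exprS; apply: le_trans (ler_wpM2l h1_ge0 IHn); rewrite mulrS.
have -> : (1 + h) * (1 + h *+ n) = 1 + (h + h *+ n) + h * h *+ n.
  by rewrite mulrDl mul1r mulrDr mulr1 mulrnAr; ring.
by rewrite lerDl mulrn_wge0 // mulr_ge0.
Qed.

Lemma exprn_eventually_le (R : archiNumFieldType) (r eps : R) :
  0 < r < 1 -> 0 < eps -> exists N, forall n, (N <= n)%N -> r ^+ n <= eps.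
Proof.
case/andP=> r_gt0 r_lt1 eps_gt0.
have [h h_gt0 rV] : exists2 h : R, 0 < h & r^-1 = 1 + h.
  by exists (r^-1 - 1); rewrite ?subr_gt0 ?invf_gt1 // addrC subrK.
exists (Num.bound (eps^-1 / h)) => n le_Nn.
have epsV_le : eps^-1 <= h *+ n.
  have : eps^-1 / h < (Num.bound (eps^-1 / h))%:R.
    by apply: archi_boundP; rewrite divr_ge0 ?invr_ge0 ?ltW.
  rewrite ltr_pdivrMr // => /ltW /le_trans; apply.
  by rewrite -[h *+ n]mulr_natl ler_pM2r // ler_nat.
have : eps^-1 <= r^-1 ^+ n.
  rewrite rV; apply: le_trans epsV_le _.
  by apply: le_trans _ (bernoulli_ler n (ltW h_gt0)); exact: ler_wpDl.
by rewrite exprVn lef_pV2 ?posrE ?exprn_gt0.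
Qed.

Lemma ler_bigmax_real (R : numDomainType) (I : eqType) (r : seq I)
    (P : pred I) (F : I -> R) :
  (forall i, P i -> F i \is Num.real) ->
  {in r, forall i, P i -> F i <= \big[Num.max/0]_(t <- r | P t) F t}.
Proof.
move=> F_real; elim: r => [|a r IHr] i //.
rewrite in_cons big_cons => /orP[/eqP -> Pa | ir Pi].
  by rewrite Pa comparable_le_max ?lexx // real_comparable ?F_real //
    bigmax_real ?real0.
case: ifP => Pa; last exact: IHr.
rewrite comparable_le_max ?IHr ?orbT //.
by rewrite real_comparable ?F_real // bigmax_real ?real0.
Qed.

Lemma sum_dominant_dist (R : numDomainType) (I : finType) (k : I)
    (z c : I -> R) (r : R) n :
  0 <= r -> z k = 1 -> (forall s, s != k -> `|z s| <= r) ->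
  `|\sum_s c s * z s ^+ n - c k| <= (\sum_s `|c s|) * r ^+ n.
Proof.
move=> r_ge0 zk z_le.
rewrite (bigD1 k) //= zk expr1n mulr1 addrC addrK.
rewrite mulr_suml [X in _ <= X](bigD1 k) //=.
apply: le_trans (ler_norm_sum _ _ _) _.
apply: ler_wpDl; first by rewrite mulr_ge0 ?exprn_ge0.
apply: ler_sum => s sk; rewrite normrM normrX ler_wpM2l //.
by rewrite lerXn2r ?nnegrE ?z_le.
Qed.

Lemma dist_divr_le (R : numFieldType) (X Y a b : R) :
  b != 0 -> `|Y - b| <= `|b| / 2 ->
  `|X / Y - a / b| <= 2 / `|b| ^+ 2 * `|X * b - a * Y|.
Proof.
move=> b_neq0 Y_near.
have b_gt0 : 0 < `|b| by rewrite normr_gt0.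
have b2_gt0 : 0 < `|b| / 2 by rewrite divr_gt0.
have Y_ge : `|b| / 2 <= `|Y|.
  have : `|b| - `|Y| <= `|b| / 2.
    by apply: le_trans (lerB_dist b Y) _; rewrite distrC.
  by rewrite lerBlDr {1}[`|b|](splitr `|b|) lerD2l.
have Y_neq0 : Y != 0 by rewrite -normr_gt0; exact: lt_le_trans Y_ge.
have -> : X / Y - a / b = (X * b - a * Y) / (Y * b).
  by field; rewrite Y_neq0 b_neq0.
rewrite normrM normfV normrM mulrC ler_wpM2r // -[2 / _]invf_div.
have Y_gt0 := lt_le_trans b2_gt0 Y_ge.
rewrite lef_pV2 ?posrE ?mulr_gt0 ?invr_gt0 ?exprn_gt0 //.
by rewrite expr2 mulrAC ler_wpM2r.
Qed.

Lemma ratio_dominant_geometric (R : archiNumFieldType) (I : finType) (k : I)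
    (g c d : I -> R) (r : R) :
  0 < r < 1 -> g k != 0 -> (forall s, s != k -> `|g s| <= r * `|g k|) ->
  d k != 0 ->
  exists2 C, 0 < C & exists N, forall n, (N <= n)%N ->
    `|(\sum_s c s * g s ^+ n) / (\sum_s d s * g s ^+ n) - c k / d k|
      <= C * r ^+ n.
Proof.
move=> r_bnd gk_neq0 g_dom dk_neq0; have /andP[r_gt0 _] := r_bnd.
pose z s := g s / g k.
have zk : z k = 1 by rewrite /z divff.
have z_le s : s != k -> `|z s| <= r.
  by move=> sk; rewrite normrM normfV ler_pdivrMr ?normr_gt0 ?g_dom.
have sum_z e n : \sum_s e s * g s ^+ n = (\sum_s e s * z s ^+ n) * g k ^+ n.
  by rewrite mulr_suml; apply: eq_bigr => s _; rewrite -mulrA -exprMn divfK.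
pose Kd := \sum_s `|d s|; pose K := \sum_s `|c s * d k - c k * d s|.
have Kd_ge0 : 0 <= Kd by rewrite sumr_ge0.
have K_ge0 : 0 <= K by rewrite sumr_ge0.
have dk_gt0 : 0 < `|d k| by rewrite normr_gt0.
have eps_gt0 : 0 < `|d k| / 2 / (Kd + 1) by rewrite !divr_gt0 ?ltr_wpDl.
have [N rn_small] := exprn_eventually_le r_bnd eps_gt0.
exists (2 / `|d k| ^+ 2 * K + 1).
  by apply: ltr_wpDl; rewrite ?mulr_ge0 ?invr_ge0 ?exprn_ge0.
exists N => n le_Nn.
rewrite !sum_z -mulf_div divff ?expf_neq0 // mulr1.
set X := \sum_s c s * z s ^+ n; set Y := \sum_s d s * z s ^+ n.
have Y_near : `|Y - d k| <= `|d k| / 2.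
  apply: le_trans (sum_dominant_dist d n (ltW r_gt0) zk z_le) _.
  apply: le_trans (_ : (Kd + 1) * r ^+ n <= _).
    by rewrite ler_pM2r ?exprn_gt0 // lerDl.
  by rewrite mulrC -ler_pdivlMr ?ltr_wpDl ?rn_small.
have num_small : `|X * d k - c k * Y| <= K * r ^+ n.
  have -> : X * d k - c k * Y =
      \sum_s (c s * d k - c k * d s) * z s ^+ n - (c k * d k - c k * d k).
    rewrite subrr subr0 mulr_suml mulr_sumr -sumrB.
    by apply: eq_bigr => s _; ring.
  exact: sum_dominant_dist (ltW r_gt0) zk z_le.
apply: le_trans (dist_divr_le X (c k) dk_neq0 Y_near) _.
have c2_ge0 : 0 <= 2 / `|d k| ^+ 2 by rewrite divr_ge0 ?exprn_ge0.
apply: le_trans (ler_wpM2l c2_ge0 num_small) _.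
by rewrite mulrA ler_pM2r ?exprn_gt0 // lerDl.
Qed.

Lemma mulmx_expr_eigen (R : comPzRingType) n (v : 'rV[R]_n) (B : 'M_n) lam e :
  v *m B = lam *: v -> v *m B ^+ e = lam ^+ e *: v.
Proof.
move=> vB; elim: e => [|e IHe]; first by rewrite !expr0 mulmx1 scale1r.
by rewrite exprSr -mulmxE mulmxA IHe -scalemxAl vB scalerA -exprSr.
Qed.

Lemma expmx_entry_eigen_rows (R : comUnitRingType) n (V B : 'M[R]_n)
    (lam : 'I_n -> R) e i j :
  V \in unitmx -> (forall s, row s V *m B = lam s *: row s V) ->
  (B ^+ e) i j = \sum_s invmx V i s * V s j * lam s ^+ e.
Proof.
move=> V_unit V_eigen; rewrite -[B ^+ e](mulKmx V_unit) mxE.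
apply: eq_bigr => s _; rewrite -mulrA; congr (_ * _).
have /rowP/(_ j) := mulmx_expr_eigen e (V_eigen s).
by rewrite -row_mul !mxE mulrC.
Qed.

Lemma vandermonde_unitmx (m : nat) (alpha : 'I_m -> algC) :
  injective alpha -> vandermonde alpha \in unitmx.
Proof.
move=> alpha_inj; rewrite unitmxE unitfE.
have -> : vandermonde alpha = (Vandermonde m (\row_s alpha s))^T.
  by apply/matrixP => a b; rewrite !mxE.
rewrite det_tr det_Vandermonde; apply/prodf_neq0 => a _; apply/prodf_neq0 => b ab.
by rewrite !mxE subr_eq0; apply: contraTneq ab => /alpha_inj ->; rewrite ltnn.
Qed.

Lemma charpoly_u_root (F : numFieldType) m (u : 'I_m -> rat) (a : F) :
  root (map_poly ratr (charpoly_u u)) a ->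
  a ^+ m = \sum_(s < m) ratr (u (rev_ord s)) * a ^+ s.
Proof.
rewrite /root /charpoly_u rmorphB rmorph_sum /= map_polyXn !hornerE horner_sum.
rewrite subr_eq0 => /eqP ->; apply: eq_bigr => s _.
by rewrite map_polyZ map_polyXn hornerZ hornerXn.
Qed.

Lemma companion_row_eigen (F : numFieldType) m (u : 'I_m -> rat) (a : F) :
  root (map_poly ratr (charpoly_u u)) a ->
  (\row_(j < m) a ^+ j) *m map_mx ratr (companion u) = a *: \row_(j < m) a ^+ j.
Proof.
move=> a_root; apply/rowP => b; rewrite !mxE -exprS.
under eq_bigr do rewrite !mxE.
have [b_last | b_notlast] := eqVneq b.+1 m.
  rewrite b_last (charpoly_u_root a_root).
  by apply: eq_bigr => s _; rewrite mulrC.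
have b1_lt : (b.+1 < m)%N by rewrite ltn_neqAle b_notlast ltn_ord.
rewrite (bigD1 (Ordinal b1_lt)) //= eqxx rmorph1 mulr1 big1 ?addr0 //.
move=> c c_neq; rewrite -val_eqE /= in c_neq.
by rewrite (negbTE c_neq) rmorph0 mulr0.
Qed.

Lemma Mx_row_eigen m (u x : 'I_m -> rat) (alpha : 'I_m -> algC) s :
  root (map_poly ratr (charpoly_u u)) (alpha s) ->
  row s (vandermonde alpha) *m map_mx ratr (Mx u x)
    = gamma x alpha s *: row s (vandermonde alpha).
Proof.
move=> alpha_root.
have -> : row s (vandermonde alpha) = \row_(j < m) alpha s ^+ j.
  by apply/rowP => j; rewrite !mxE.
rewrite map_mx_sum mulmx_sumr /gamma scaler_suml; apply: eq_bigr => n _.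
rewrite map_mxZ rmorphXn -scalemxAr.
by rewrite (mulmx_expr_eigen n (companion_row_eigen alpha_root)) scalerA.
Qed.

Lemma Mx_expr_entry m (u x : 'I_m -> rat) (alpha : 'I_m -> algC) n i j :
  injective alpha -> (forall s, root (map_poly ratr (charpoly_u u)) (alpha s)) ->
  ratr ((Mx u x ^+ n) i j)
    = \sum_s invmx (vandermonde alpha) i s * vandermonde alpha s j
             * gamma x alpha s ^+ n.
Proof.
move=> alpha_inj alpha_root.
have -> : ratr ((Mx u x ^+ n) i j) = map_mx (@ratr algC) (Mx u x ^+ n) i j.
  by rewrite mxE.
rewrite rmorphXn; apply: expmx_entry_eigen_rows; first exact: vandermonde_unitmx.
by move=> s; apply: Mx_row_eigen.
Qed.

Lemma cinv_gt0_gamma_neq0 m (x : 'I_m -> rat) (alpha : 'I_m -> algC) k :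
  0 < cinv x alpha k -> gamma x alpha k != 0.
Proof.
(* If gamma_k = 0, every ratio |gamma_s| / |gamma_k| is _ / 0 = 0. *)
apply: contraTneq => gk0; rewrite /cinv.
rewrite (big_ind (fun y : algC => y = 0)) ?ltxx // => [a b -> -> | s _].
  by rewrite maxxx.
by rewrite gk0 normr0 invr0 mulr0.
Qed.

Lemma norm_gamma_le_cinv m (x : 'I_m -> rat) (alpha : 'I_m -> algC) k s :
  gamma x alpha k != 0 -> s != k ->
  `|gamma x alpha s| <= cinv x alpha k * `|gamma x alpha k|.
Proof.
move=> gk_neq0 sk; rewrite -ler_pdivrMr ?normr_gt0 //.
apply: (ler_bigmax_real _ (mem_index_enum s) sk) => t _.
by rewrite ger0_real ?divr_ge0.
Qed.

Theorem theorem2 (m : nat) (hm : (2 <= m)%N) (u : 'I_m -> rat)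
  (alpha : 'I_m -> algC) (alpha_inj : injective alpha)
  (alpha_root : forall s, root (map_poly ratr (charpoly_u u)) (alpha s))
  (x : 'I_m -> rat) (k i j p q : 'I_m) (hijpq : (i, j) != (p, q)) :
  let V := vandermonde alpha in
  let A_ := fun s => invmx V i s * V s j in
  let B_ := fun s => invmx V p s * V s q in
  let L := A_ k / B_ k in
  let M := Mx u x in
  B_ k != 0 ->
  0 < cinv x alpha k < 1 ->
  forall l : 'I_m, l != k ->
  cinv x alpha k = `|gamma x alpha l| / `|gamma x alpha k| ->
  A_ l * B_ k - A_ k * B_ l != 0 ->
  exists2 C : algC, 0 < C &
    exists N : nat, forall n : nat, (N <= n)%N ->
      `| ratr ((M ^+ n) i j) / ratr ((M ^+ n) p q) - L |
        <= C * (cinv x alpha k) ^+ n.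
Proof.
move=> V A_ B_ L M Bk_neq0 cinv_bnd _ _ _ _.
have gk_neq0 : gamma x alpha k != 0.
  by apply: cinv_gt0_gamma_neq0; case/andP: cinv_bnd.
have [C C_gt0 [N HN]] := ratio_dominant_geometric A_ cinv_bnd gk_neq0
  (fun s => norm_gamma_le_cinv gk_neq0) Bk_neq0.
exists C => //; exists N => n le_Nn.
by rewrite /M !(Mx_expr_entry x n _ _ alpha_inj alpha_root); apply: HN.
Qed.
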